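(* Let $\lambda$ be a partition and $\sigma$ a sorted tableau of $\mathrm{dg}(\lambda)$. Then $\mathrm{maj}(\tau)=\mathrm{maj}(\sigma)$ for every $\tau\in\mathcal{F}(\sigma)$.
   Context: Diagrams and fillings: for a partition $\lambda=(\lambda_1\ge\dots\ge\lambda_n>0)$, $\mathrm{dg}(\lambda)$ is the set of cells $(i,r)$, $1\le i\le n$, $1\le r\le\lambda_i$ (columns from the left, rows from the bottom). A filling is $\sigma:\mathrm{dg}(\lambda)\to\mathbb{Z}_{>0}$; a basement row $0$ with all entries $\infty$ is adjoined. $\mathrm{leg}(i,r)=\lambda_i-r$. Triples: for $u<v$, $r\ge1$, $(v,r),(u,r)\in\mathrm{dg}(\lambda)$, cells $(v,r),(u,r),(u,r-1)$; with $a=\sigma(v,r),b=\sigma(u,r),c=\sigma(u,r-1)$ counterclockwise (inversion) if $a<b\le c$ or $c<a<b$ or $b\le c<a$, clockwise otherwise. Descent: $(u,r)$, $r\ge2$, with $\sigma(u,r)>\sigma(u,r-1)$; $\mathrm{maj}(\sigma)=\sum_{\text{descents}}(\mathrm{leg}+1)$. Sorted tableau: for non-identical columns $A$ left of $B$ of equal height with entries $a_k,b_k$ bottom to top and $r$ least with $a_r\ne b_r$: $A\lhd B$ if $r=1$ and $a_1<b_1$, or $r\ge2$ and the cells of $b_r,a_r,a_{r-1}$ do not form a counterclockwise triple; $\sigma$ is sorted if any two columns of equal height, $A$ left of $B$, are identical or satisfy $A\lhd B$. Operator $\mathcal{T}_i^{(r)}$ (defined when columns $i,i+1$ agree in rows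 $<r$ and differ in row $r$): swap entries of $(i,r),(i+1,r)$; then repeatedly, if cells $(i+1,r+1),(i,r+1)$ exist and the triple $(i+1,r+1),(i,r+1),(i,r)$ changed orientation (clockwise/counterclockwise) under the last swap, swap entries of $(i,r+1),(i+1,r+1)$ and increase $r$ by one; otherwise stop. PDS: let $\mathbf{w_0}=(s_1)(s_2s_1)\cdots(s_{n-1}\cdots s_2s_1)=s_{j_N}\cdots s_{j_1}$ ($N=\binom n2$). For $v\in S_n$ set $v_{(0)}=v$ and for $k=1,\dots,N$: $v_{(k)}=v_{(k-1)}s_{j_k}$ if $\ell(v_{(k-1)}s_{j_k})<\ell(v_{(k-1)})$, else $v_{(k)}=v_{(k-1)}$. The PDS of $v$ is the product, in the same left-to-right order, of those $s_{j_k}$ at which the multiplication was performed; writing it $s_{i_p}\cdots s_{i_1}$, set $\mathcal{T}_v^{(r)}=\mathcal{T}_{i_p}^{(r)}\circ\cdots\circ\mathcal{T}_{i_1}^{(r)}$. Blocks: in a filling of a rectangle, a block in row $r$ is a maximal set of consecutive columns $i,\dots,j$ that agree in every row $s<r$. For row $r$ of $\sigma$ with entries $b=(b_1,\dots,b_n)$ and blocks $B^{(1)},\dots,B^{(\ell)}$, let $W_r(\sigma)$ be the set of distinct words obtained by permuting entries of $b$ only within blocks; for $w\in W_r(\sigma)$ let $\tilde w\in S_n$ be the shortest permutation with $(b_{\tilde w^{-1}(1)},\dots,b_{\tilde w^{-1}(n)})=w$. Family: if $\sigma$ is a sorted tableau of an $m\times n$ rectangle, set $\mathcal F^{(m)}=\{\sigma\}$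 and for $r=m,m-1,\dots,1$ set $\mathcal F^{(r-1)}=\{\mathcal{T}^{(r)}_{\tilde w}(\tau):\tau\in\mathcal F^{(r)},\,w\in W_r(\sigma)\}$; $\mathcal F(\sigma)=\mathcal F^{(0)}$. For general $\lambda$, $\sigma$ is the left-to-right concatenation of sorted tableaux $\sigma_1,\dots,\sigma_k$ of the maximal rectangles of equal-height columns, and $\mathcal F(\sigma)$ is the set of concatenations $\tau_1\cdots\tau_k$ with $\tau_j\in\mathcal F(\sigma_j)$. *)

From mathcomp Require Import all_boot all_order all_fingroup.
Set Implicit Arguments. Unset Strict Implicit. Unset Printing Implicit Defensive.

(* A filling of dg(lambda) is the list of its columns, left to right; each
   column lists its entries bottom to top.  Columns are numbered 1..n and rows
   1..lambda_i as in the paper; row 0 is the basement (entries = infinity). *)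
Definition filling := seq (seq nat).

Definition col (s : filling) (i : nat) : seq nat := nth [::] s i.-1.
Definition height (s : filling) (i : nat) : nat := size (col s i).

(* extended values: None = infinity *)
Definition xnat := option nat.
Definition ltx (x y : xnat) : bool :=
  match x, y with
  | Some a, Some b => a < b
  | Some _, None => true
  | None, _ => false
  end.
Definition lex (x y : xnat) : bool := ~~ ltx y x.

Definition ent (s : filling) (i r : nat) : xnat :=
  if r == 0 then None else Some (nth 0 (col s i) r.-1).

Definition ccw (a b c : xnat) : bool :=
  [|| ltx a b && lex b c, ltx c a && ltx a b | lex b c && ltx c a].

Definition ccw_triple (s : filling) (u v r : nat) : bool :=
  ccw (ent s v r) (ent s u r) (ent s u r.-1).

Definition is_filling (s : filling) : Prop :=
  sorted geq (map size s) /\ all (fun c => 0 < size c) s /\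
  all (fun c => all (fun x => 0 < x) c) s.

(* maj: sum over descents (u,r), r >= 2, of leg(u,r)+1 = lambda_u - r + 1 *)
Definition maj (s : filling) : nat :=
  \sum_(c <- s) \sum_(2 <= r < (size c).+1)
     (if nth 0 c r.-2 < nth 0 c r.-1 then (size c - r).+1 else 0).

(* A <| B for columns A (left) and B (right) of equal height, A <> B *)
Definition col_lhd (A B : seq nat) : bool :=
  let k := find (fun k => nth 0 A k != nth 0 B k) (iota 0 (size A)) in
  if k == 0 then nth 0 A 0 < nth 0 B 0
  else ~~ ccw (Some (nth 0 B k)) (Some (nth 0 A k)) (Some (nth 0 A k.-1)).

Definition sorted_tableau (s : filling) : Prop :=
  is_filling s /\
  forall u v, 1 <= u -> u < v -> v <= size s -> height s u = height s v ->
    col s u = col s v \/ col_lhd (col s u) (col s v).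

Definition set_ent (s : filling) (i r x : nat) : filling :=
  set_nth [::] s i.-1 (set_nth 0 (col s i) r.-1 x).
Definition swap_cells (s : filling) (i r : nat) : filling :=
  let a := nth 0 (col s i) r.-1 in
  let b := nth 0 (col s i.+1) r.-1 in
  set_ent (set_ent s i r b) i.+1 r a.

(* old = state before the last swap (made in row r), new = after it *)
Fixpoint T_prop (fuel i r : nat) (old new : filling) : filling :=
  match fuel with
  | 0 => new
  | f.+1 =>
    if [&& r.+1 <= height new i, r.+1 <= height new i.+1 &
           ccw_triple old i i.+1 r.+1 != ccw_triple new i i.+1 r.+1]
    then T_prop f i r.+1 new (swap_cells new i r.+1)
    else new
  end.

Definition T_op (i r : nat) (s : filling) : filling :=
  T_prop (height s i) i r s (swap_cells s i r).

(* composition as functions: (pcomp v w) x = v (w x) *)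
Definition pcomp n (v w : 'S_n) : 'S_n := (w * v)%g.

Definition plen n (v : 'S_n) : nat :=
  #|[set p : 'I_n * 'I_n | (p.1 < p.2) && (v p.2 < v p.1)]|.

(* simple transposition s_j (1 <= j <= n-1) exchanging j and j+1; in 'I_n the
   point k stands for k+1, so s_j exchanges the ordinals j-1 and j *)
Definition sj n (j : nat) : 'S_n :=
  match @insub _ (fun k => k < n) _ j.-1, @insub _ (fun k => k < n) _ j with
  | Some a, Some b => tperm a b
  | _, _ => 1%g
  end.

(* w0 = (s_1)(s_2 s_1)...(s_{n-1}...s_1), read left to right *)
Definition w0_word (n : nat) : seq nat :=
  flatten [seq rev (iota 1 k) | k <- iota 1 n.-1].
(* the indices j_1, ..., j_N with w0 = s_{j_N} ... s_{j_1} *)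
Definition w0_js (n : nat) : seq nat := rev (w0_word n).

(* the indices i_1, i_2, ..., i_p (in this order) of the PDS s_{i_p}...s_{i_1} *)
Fixpoint pds_aux n (v : 'S_n) (js : seq nat) : seq nat :=
  match js with
  | [::] => [::]
  | j :: js' =>
    let v' := pcomp v (sj n j) in
    if plen v' < plen v then j :: pds_aux v' js' else pds_aux v js'
  end.
Definition pds n (v : 'S_n) : seq nat := pds_aux v (w0_js n).

Definition T_perm n (v : 'S_n) (r : nat) (s : filling) : filling :=
  foldl (fun t i => T_op i r t) s (pds v).

(* row r of s as a word indexed by 'I_n (ordinal k = column k+1) *)
Definition row_word (s : filling) (r : nat) n (k : 'I_n) : nat :=
  nth 0 (col s k.+1) r.-1.

Definition agree_below (s : filling) (r a b : nat) : bool :=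
  take r.-1 (col s a) == take r.-1 (col s b).

Definition same_block (s : filling) (r a b : nat) : bool :=
  all (fun m => agree_below s r a m) (iota (minn a b) (maxn a b - minn a b).+1).

Definition permw n (b : 'I_n -> nat) (p : 'S_n) : seq nat :=
  [seq b ((p^-1)%g k) | k <- enum 'I_n].

Definition inW (s : filling) (r : nat) (w : seq nat) : Prop :=
  exists p : 'S_(size s),
    (forall k : 'I_(size s), same_block s r k.+1 (p k).+1) /\
    w = permw (@row_word s r (size s)) p.

Definition shortest_for (s : filling) (r : nat) (w : seq nat)
  (p : 'S_(size s)) : Prop :=
  permw (@row_word s r (size s)) p = w /\
  forall q : 'S_(size s), permw (@row_word s r (size s)) q = w -> plen p <= plen q.
Arguments shortest_for : clear implicits.

(* for a sorted tableau s of an m x n rectangle (m = height s 1):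
   famR s k = F^(m-k) *)
Fixpoint famR (s : filling) (k : nat) : filling -> Prop :=
  match k with
  | 0 => fun t => t = s
  | k'.+1 => fun t' =>
      let r := height s 1 - k' in
      exists t w (p : 'S_(size s)),
        famR s k' t /\ inW s r w /\ shortest_for s r w p /\ t' = T_perm p r t
  end.

Definition fam_rect (s : filling) : filling -> Prop := famR s (height s 1).

(* decomposition into maximal rectangles of equal-height columns *)
Definition rects (s : filling) : seq filling :=
  foldr (fun c acc =>
           match acc with
           | (d :: g) :: gs => if size d == size c then (c :: d :: g) :: gs
                               else [:: c] :: acc
           | _ => [:: c] :: acc
           end) [::] s.

Definition tab_family (s : filling) (t : filling) : Prop :=
  exists ts : seq filling,
    size ts = size (rects s) /\
    (forall j, j < size ts -> fam_rect (nth [::] (rects s) j) (nth [::] ts j)) /\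
    t = flatten ts.

From Pilot Require Import Defs.
From mathcomp Require Import all_boot all_order all_fingroup.
From mathcomp Require Import zify.
Set Implicit Arguments. Unset Strict Implicit. Unset Printing Implicit Defensive.

(* maj is a sum of contributions of the individual columns, and every member
   of F(sigma) is obtained from sigma, rectangle by rectangle, by operators
   T_i^(r).  The proof shows that each operator actually used preserves maj.

   1. Local invariance.  Let columns i, i+1 of a rectangle agree below row r.
      Then T_i^(r) exchanges the entries of the two columns in a run of rows
      r..k and stops at k either at the top or because the orientation of the
      triple in row k+1 is unchanged.  Inside the run descents are just
      exchanged; at row r the agreement below makes the count unchanged; at
      row k+1 the unchanged orientation gives the same balance
      (ccw_descent_balance).  Hence col_maj of the two columns is preserved.
   2. Legality.  A shortest permutation realising a word of W_r(sigma) never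
      inverts two points separated by a block boundary of row r (it would have
      to invert two equal letters, contradicting minimality), and every
      letter s_j of its PDS then joins columns j, j+1 of one block, i.e.
      columns agreeing below row r.
   3. Induction over the rows builds F^(r-1) from F^(r), and maj is additive
      over the rectangles of sigma. *)

Definition col_maj (c : seq nat) : nat :=
  \sum_(2 <= r < (size c).+1)
     (if nth 0 c r.-2 < nth 0 c r.-1 then (size c - r).+1 else 0).

Lemma maj_cons c s : maj (c :: s) = col_maj c + maj s.
Proof. by rewrite /maj big_cons. Qed.

Lemma maj_cat s1 s2 : maj (s1 ++ s2) = maj s1 + maj s2.
Proof. by rewrite /maj big_cat. Qed.

Lemma maj_flatten ts : maj (flatten ts) = \sum_(t <- ts) maj t.
Proof.
elim: ts => [|t ts IH]; first by rewrite big_nil /maj big_nil.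
by rewrite big_cons /= maj_cat IH.
Qed.

(* Two-column model of T_i^(r): the entry of a column in row r (row 0 being
   the basement), the orientation of the triple (B,r), (A,r), (A,r-1), the
   exchange of row r, and the propagation loop on a pair of columns. *)
Definition cell (c : seq nat) (r : nat) : xnat :=
  if r == 0 then None else Some (nth 0 c r.-1).

Definition ccw_cols (A B : seq nat) (r : nat) : bool :=
  ccw (cell B r) (cell A r) (cell A r.-1).

Definition swap_row (A B : seq nat) (r : nat) : seq nat * seq nat :=
  (set_nth 0 A r.-1 (nth 0 B r.-1), set_nth 0 B r.-1 (nth 0 A r.-1)).

Fixpoint T_cols (fuel r : nat) (oA oB nA nB : seq nat) : seq nat * seq nat :=
  match fuel with
  | 0 => (nA, nB)
  | f.+1 =>
    if [&& r.+1 <= size nA, r.+1 <= size nB & ccw_cols oA oB r.+1 != ccw_cols nA nB r.+1]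
    then T_cols f r.+1 nA nB (swap_row nA nB r.+1).1 (swap_row nA nB r.+1).2
    else (nA, nB)
  end.

Lemma set_nth_cat (T : Type) (x0 : T) pre y s z :
  set_nth x0 (pre ++ y :: s) (size pre) z = pre ++ z :: s.
Proof. by elim: pre => //= a pre ->. Qed.

Section AdjacentColumns.
Variables (pre suf : filling).
Local Notation i := (size pre).+1.

Lemma col_left A B : col (pre ++ A :: B :: suf) i = A.
Proof. by rewrite /col /= nth_cat ltnn subnn. Qed.

Lemma col_right A B : col (pre ++ A :: B :: suf) i.+1 = B.
Proof. by rewrite /col /= nth_cat ltnNge leqnSn /= subSnn. Qed.

Lemma swap_cellsE A B r :
  swap_cells (pre ++ A :: B :: suf) i r =
  pre ++ (swap_row A B r).1 :: (swap_row A B r).2 :: suf.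
Proof.
rewrite /swap_cells col_left col_right /set_ent col_left /= set_nth_cat.
rewrite -cat_rcons /col nth_cat size_rcons ltnn subnn /=.
by rewrite -(size_rcons pre (set_nth 0 A r.-1 (nth 0 B r.-1))) set_nth_cat cat_rcons.
Qed.

Lemma T_propE f r oA oB nA nB :
  T_prop f i r (pre ++ oA :: oB :: suf) (pre ++ nA :: nB :: suf) =
  pre ++ (T_cols f r oA oB nA nB).1 :: (T_cols f r oA oB nA nB).2 :: suf.
Proof.
elim: f r oA oB nA nB => [//|f IH] r oA oB nA nB /=.
rewrite /height /ccw_triple /ent !col_left !col_right /ccw_cols /cell.
by case: ifP => // _; rewrite swap_cellsE IH.
Qed.

Lemma T_opE A B r :
  T_op i r (pre ++ A :: B :: suf) =
  pre ++ (T_cols (size A) r A B (swap_row A B r).1 (swap_row A B r).2).1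
      :: (T_cols (size A) r A B (swap_row A B r).1 (swap_row A B r).2).2 :: suf.
Proof. by rewrite /T_op swap_cellsE T_propE /height col_left. Qed.
End AdjacentColumns.

Definition exch (A B : seq nat) (lo hi : nat) : seq nat :=
  mkseq (fun j => if (lo <= j) && (j < hi) then nth 0 B j else nth 0 A j) (size A).

Lemma size_exch A B lo hi : size (exch A B lo hi) = size A.
Proof. exact: size_mkseq. Qed.

Lemma nth_exch A B lo hi j : j < size A ->
  nth 0 (exch A B lo hi) j = if (lo <= j) && (j < hi) then nth 0 B j else nth 0 A j.
Proof. exact: nth_mkseq. Qed.

Lemma exch_empty A B lo : exch A B lo lo = A.
Proof.
apply: (@eq_from_nth _ 0); rewrite size_exch // => j jA.
by rewrite nth_exch //; case: ifP => //; lia.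
Qed.

Lemma take_exch A B lo hi : take lo (exch A B lo hi) = take lo A.
Proof.
apply: (@eq_from_nth _ 0); rewrite !size_take size_exch // => j jlo.
have [jl jA] : j < lo /\ j < size A by move: jlo; case: ifP; lia.
by rewrite !nth_take // nth_exch //; case: ifP => //; lia.
Qed.

Lemma exch_set A B lo k : lo <= k < size A ->
  set_nth 0 (exch A B lo k) k (nth 0 B k) = exch A B lo k.+1.
Proof.
move=> /andP[lok kA]; apply: (@eq_from_nth _ 0).
  by rewrite size_set_nth !size_exch; lia.
move=> j; rewrite size_set_nth size_exch => jA.
have {}jA : j < size A by lia.
rewrite nth_set_nth /= !nth_exch //.
case: eqP => [->|/eqP jk]; first by rewrite ltnSn lok.
by have -> : (j < k.+1) = (j < k) by lia.
Qed.

Lemma swap_row_exch A B lo k : size A = size B -> lo <= k < size A ->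
  swap_row (exch A B lo k) (exch B A lo k) k.+1 = (exch A B lo k.+1, exch B A lo k.+1).
Proof.
move=> sAB hk; rewrite /swap_row !nth_exch -?sAB; try lia.
have -> : (lo <= k) && (k < k) = false by lia.
by rewrite !exch_set // -sAB.
Qed.

(* Stopping condition of T at 0-based row k: the triple over (B,k), (A,k) has
   the same orientation whether the entry below is A's or B's. *)
Definition orientation_kept (A B : seq nat) (k : nat) : bool :=
  ccw (Some (nth 0 B k)) (Some (nth 0 A k)) (Some (nth 0 A k.-1)) ==
  ccw (Some (nth 0 B k)) (Some (nth 0 A k)) (Some (nth 0 B k.-1)).

Lemma ccw_cols_exch A B lo k : size A = size B -> lo < k < size A ->
  (ccw_cols (exch A B lo k.-1) (exch B A lo k.-1) k.+1 ==
   ccw_cols (exch A B lo k) (exch B A lo k) k.+1) = orientation_kept A B k.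
Proof.
move=> sAB hk; rewrite /ccw_cols /cell /= !nth_exch -?sAB; try lia.
have -> : (k == 0) = false by lia.
have -> : (lo <= k) && (k < k.-1) = false by lia.
have -> : (lo <= k.-1) && (k.-1 < k.-1) = false by lia.
have -> : (lo <= k) && (k < k) = false by lia.
by have -> : (lo <= k.-1) && (k.-1 < k) by lia.
Qed.

Lemma ccw_descent_balance a b x y :
  ccw (Some b) (Some a) (Some x) = ccw (Some b) (Some a) (Some y) ->
  (x < a) + (y < b) = (y < a) + (x < b).
Proof.
rewrite /ccw /lex /ltx.
by case: (leqP a x); case: (leqP b x); case: (leqP a y); case: (leqP b y);
  case: (leqP a b) => //= *; lia.
Qed.

Definition desc (c : seq nat) (j : nat) : nat := nth 0 c j.-2 < nth 0 c j.-1.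

Lemma col_maj_pair C D m : size C = m -> size D = m ->
  col_maj C + col_maj D = \sum_(2 <= j < m.+1) (desc C j + desc D j) * (m - j).+1.
Proof.
move=> <- sD; rewrite /col_maj sD -big_split /=; apply: eq_bigr => j _.
by rewrite /desc; case: ifP => _; case: ifP => _ /=; lia.
Qed.

Section ExchangeColumns.
Variables (A B : seq nat) (m lo : nat).
Hypotheses (sA : size A = m) (sB : size B = m).
Hypothesis agree : forall j, j < lo -> nth 0 A j = nth 0 B j.

(* Row by row, exchanging rows lo+1..k keeps the number of descents of the
   pair: below row lo+1 nothing changes, at row lo+1 the rows underneath are
   equal, at row k+1 the orientation test applies. *)
Lemma exch_desc k j : lo < k <= m -> (k < m -> orientation_kept A B k) -> 2 <= j <= m ->
  desc (exch A B lo k) j + desc (exch B A lo k) j = desc A j + desc B j.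
Proof.
move=> hk hkept hj; rewrite /desc !nth_exch ?sA ?sB; try lia.
have [h|[h|[h|[h|h]]]] : j.-1 < lo \/ j.-1 = lo \/ lo < j.-1 < k \/ j.-1 = k \/ k < j.-1
  by lia.
- have -> : (lo <= j.-1) && (j.-1 < k) = false by lia.
  by have -> : (lo <= j.-2) && (j.-2 < k) = false by lia.
- have -> : (lo <= j.-1) && (j.-1 < k) by lia.
  have -> : (lo <= j.-2) && (j.-2 < k) = false by lia.
  have low_eq : nth 0 A j.-2 = nth 0 B j.-2 by apply: agree; lia.
  by rewrite low_eq addnC.
- have -> : (lo <= j.-1) && (j.-1 < k) by lia.
  have -> : (lo <= j.-2) && (j.-2 < k) by lia.
  by rewrite addnC.
- have -> : (lo <= j.-1) && (j.-1 < k) = false by lia.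
  have -> : (lo <= j.-2) && (j.-2 < k) by lia.
  have /eqP := hkept ltac:(lia); rewrite /= -h.
  by move/ccw_descent_balance; lia.
- have -> : (lo <= j.-1) && (j.-1 < k) = false by lia.
  by have -> : (lo <= j.-2) && (j.-2 < k) = false by lia.
Qed.

Lemma exch_col_maj k : lo < k <= m -> (k < m -> orientation_kept A B k) ->
  col_maj (exch A B lo k) + col_maj (exch B A lo k) = col_maj A + col_maj B.
Proof.
move=> hk hkept; rewrite !(col_maj_pair (m := m)) ?size_exch //.
rewrite big_nat_cond [RHS]big_nat_cond; apply: eq_bigr => j /andP[hj _].
by rewrite exch_desc //; lia.
Qed.

Lemma T_cols_exch f k : lo < k <= m -> m <= f + k ->
  exists k', [/\ lo < k' <= m, k' < m -> orientation_kept A B k' &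
    T_cols f k (exch A B lo k.-1) (exch B A lo k.-1) (exch A B lo k) (exch B A lo k) =
    (exch A B lo k', exch B A lo k')].
Proof.
elim: f k => [|f IH] k hk hf /=; first by exists k; split => //; lia.
rewrite !size_exch sA sB.
have [km|km] := ltnP k m; last by exists k; split => //; lia.
rewrite ccw_cols_exch ?sA ?sB; try lia.
case: (boolP (orientation_kept A B k)) => [hkept|_]; first by exists k.
have := @swap_row_exch A B lo k (etrans sA (esym sB)) ltac:(lia).
rewrite /swap_row => -[-> ->].
by apply: IH; lia.
Qed.

Lemma T_cols_maj : lo < m ->
  exists k,
    T_cols m lo.+1 A B (swap_row A B lo.+1).1 (swap_row A B lo.+1).2 =
      (exch A B lo k, exch B A lo k) /\
    col_maj (exch A B lo k) + col_maj (exch B A lo k) = col_maj A + col_maj B.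
Proof.
move=> lom.
have := @swap_row_exch A B lo lo (etrans sA (esym sB)) ltac:(lia).
rewrite !exch_empty => ->.
have [k [hk hkept]] := @T_cols_exch m lo.+1 ltac:(lia) ltac:(lia).
rewrite /= !exch_empty => ->; exists k; split => //.
exact: exch_col_maj.
Qed.
End ExchangeColumns.

Definition is_rect (m : nat) (t : filling) : bool := all (fun c => size c == m) t.

Definition maj_reshuffle (m k : nat) (t t' : filling) : Prop :=
  [/\ maj t' = maj t, size t' = size t, is_rect m t' & map (take k) t' = map (take k) t].

Lemma maj_reshuffle_refl m k t : is_rect m t -> maj_reshuffle m k t t.
Proof. by []. Qed.

Lemma maj_reshuffle_trans m k t1 t2 t3 :
  maj_reshuffle m k t1 t2 -> maj_reshuffle m k t2 t3 -> maj_reshuffle m k t1 t3.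
Proof. by move=> [e1 e2 _ e4] [f1 f2 f3 f4]; split; rewrite // ?f1 ?f2 ?f4. Qed.

Lemma maj_reshuffle_le m k k' t t' : k' <= k ->
  maj_reshuffle m k t t' -> maj_reshuffle m k' t t'.
Proof.
move=> le [e1 e2 e3 e4]; split => //.
have := congr1 (map (take k')) e4; rewrite -!map_comp.
by rewrite !(eq_map (fun x => take_takel x le)).
Qed.

Lemma take_col k (t t' : filling) i : map (take k) t' = map (take k) t ->
  take k (col t' i) = take k (col t i).
Proof.
move=> e; rewrite /col.
have h (u : filling) : take k (nth [::] u i.-1) = nth [::] (map (take k) u) i.-1.
  case: (ltnP i.-1 (size u)) => h; first by rewrite (nth_map [::]).
  by rewrite !nth_default ?size_map.
by rewrite !h e.
Qed.

Lemma split_at_col (t : filling) i : 0 < i < size t ->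
  t = take i.-1 t ++ col t i :: col t i.+1 :: drop i.+1 t.
Proof.
move=> hi; rewrite -{1}(cat_take_drop i.-1 t) /col; congr (_ ++ _).
rewrite (drop_nth [::]); last lia.
have -> : i.-1.+1 = i by lia.
by rewrite (drop_nth [::]) //; lia.
Qed.

Lemma T_op_reshuffle t i r m : 0 < i < size t -> is_rect m t -> 0 < r <= m ->
  take r.-1 (col t i) = take r.-1 (col t i.+1) -> maj_reshuffle m r.-1 t (T_op i r t).
Proof.
move=> hi hrect hr htake.
have et := split_at_col hi.
set pre := take i.-1 t in et; set suf := drop i.+1 t in et.
set A := col t i in et htake; set B := col t i.+1 in et htake.
have sp : (size pre).+1 = i by rewrite size_takel; lia.
have hrect' := hrect; rewrite /is_rect et all_cat /= in hrect'.
have /andP[_ /and3P[/eqP sA /eqP sB _]] := hrect'.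
have agree j : j < r.-1 -> nth 0 A j = nth 0 B j.
  by move=> jr; rewrite -(nth_take 0 jr) htake nth_take.
have [k [ek hmaj]] := T_cols_maj sA sB agree ltac:(lia).
rewrite prednK in ek hmaj; last lia.
rewrite et -sp T_opE sA ek /=; split.
- by rewrite !maj_cat !maj_cons; lia.
- by rewrite !size_cat.
- move: hrect'; rewrite /is_rect !all_cat /= !size_exch sA sB eqxx.
  by move=> /andP[-> /and3P[_ _ ->]].
- by rewrite !map_cat /= !take_exch.
Qed.

Section Inversions.
Variable n : nat.
Implicit Types (p v : 'S_n) (x y z : 'I_n).

Lemma ord_neq x y : x <> y -> (x : nat) <> y.
Proof. by move=> h e; apply/h/val_inj. Qed.

(* Undoing an inversion (x, y) strictly shortens p: the involution of pairs
   applying (x y) to both coordinates, unless one lies strictly between x and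
   y, maps the inversions of p o (x y) into those of p other than (x, y). *)
Lemma plen_swap_inversion p x y : x < y -> p y < p x -> plen (tperm x y * p) < plen p.
Proof.
move=> xy pyx.
pose mid u := (x < u) && (u < y).
pose f (pr : 'I_n * 'I_n) :=
  if mid pr.1 || mid pr.2 then pr else (tperm x y pr.1, tperm x y pr.2).
have midt u : mid (tperm x y u) = mid u by rewrite /mid; case: tpermP => [->|->|//]; lia.
have finv : involutive f.
  move=> [a b]; rewrite /f /=; case: (boolP (mid a || mid b)) => h /=; first by rewrite h.
  by rewrite !midt (negbTE h) !tpermK.
rewrite /plen -(card_imset _ (inv_inj finv)).
have xyI : (x, y) \in [set pr : 'I_n * 'I_n | (pr.1 < pr.2) && (p pr.2 < p pr.1)].
  by rewrite inE /= xy pyx.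
rewrite [X in _ < X](cardsD1 (x, y)) xyI add1n ltnS.
apply/subset_leq_card/subsetP => _ /imsetP[[i j] + ->].
rewrite !inE /= !permM => /andP[ij hp].
rewrite /f /mid /=.
move: hp; case: (tpermP x y i) => [ei|ei|/ord_neq hix /ord_neq hiy];
  case: (tpermP x y j) => [ej|ej|/ord_neq hjx /ord_neq hjy]; rewrite ?ei ?ej => hp;
  try subst i; try subst j;
  (case: ifP => hm; rewrite /= ?xpair_eqE).
all: apply/and3P; split; try lia.
all: apply/negP => /andP[/eqP e1 /eqP e2]; subst; lia.
Qed.

Lemma sj_shortens v (j : nat) : plen (Defs.pcomp v (sj n j)) < plen v ->
  exists a b : 'I_n,
    [/\ (a : nat) = j.-1, (b : nat) = j, 0 < j, sj n j = tperm a b & v b < v a].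
Proof.
rewrite /Defs.pcomp /sj.
case: insubP => [a _ ea|_]; last by rewrite mul1g ltnn.
case: insubP => [b _ eb|_]; last by rewrite mul1g ltnn.
move=> hlt.
have nab : a != b by apply: contraTneq hlt => ->; rewrite tperm1 mul1g ltnn.
have j0 : 0 < j by move: nab; rewrite -val_eqE ea eb; lia.
exists a, b; split => //.
have [//|ab|/val_inj/perm_inj eab] := ltngtP (v b) (v a); last first.
  by rewrite eab eqxx in nab.
have lab : a < b by rewrite ea eb; lia.
have := @plen_swap_inversion (tperm a b * v) a b lab.
rewrite !permM tpermL tpermR mulgA tperm2 mul1g => /(_ ab) h2.
by move: (ltn_trans h2 hlt); rewrite ltnn.
Qed.

Variable Adj : nat -> bool.

Definition inversions_within v :=
  forall x y, x < y -> v y < v x -> forall z : nat, x <= z -> z < y -> Adj z.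

Lemma inversions_within_step v (a b : 'I_n) : (b : nat) = a.+1 -> v b < v a ->
  inversions_within v -> inversions_within (tperm a b * v).
Proof.
move=> eb hba hv x y xy; rewrite !permM => hyx z xz zy.
have [->|za] := eqVneq z a; first by apply: (hv a b) => //; lia.
move: hyx; case: (tpermP a b x) => [ex|ex|/ord_neq hxa /ord_neq hxb];
  case: (tpermP a b y) => [ey|ey|/ord_neq hya /ord_neq hyb];
  try subst x; try subst y; move=> hyx.
all: first [ apply: (hv _ _ _ hyx); lia | lia ].
Qed.

Lemma pds_letters js v : inversions_within v ->
  forall j : nat, j \in pds_aux v js -> 0 < j < n /\ Adj j.-1.
Proof.
elim: js v => [//|j0 js IH] v hv j /=.
case: ifP => [hlt|_]; last exact: IH.
have [a [b [ea eb j0p ej hba]]] := sj_shortens hlt.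
have hv' : inversions_within (Defs.pcomp v (sj n j0)).
  by rewrite /Defs.pcomp ej; apply: inversions_within_step => //; lia.
rewrite in_cons => /orP[/eqP ->|]; last exact: IH.
by split; [rewrite j0p -eb ltn_ord | apply: (hv a b); lia].
Qed.
End Inversions.

Lemma sum_bool_gt0 n (F : 'I_n -> bool) : 0 < \sum_(k : 'I_n) (F k : nat) -> exists k, F k.
Proof.
move=> h; case: (boolP [exists k, F k]) => [/existsP//|/existsPn hn].
by move: h; rewrite big1 // => k _; rewrite (negbTE (hn k)).
Qed.

Section Crossing.
Variables (n : nat) (b : 'I_n -> nat) (z c : nat).

Let low (k : nat) : bool := k <= z.

Lemma count_low_perm (p : 'S_n) :
  \sum_(k : 'I_n) (low (p k) && (b k == c) : nat) =
  \sum_(k : 'I_n) (low k && (b ((p^-1)%g k) == c) : nat).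
Proof.
rewrite (reindex_inj (@perm_inj _ (p^-1)%g)) /=.
by apply: eq_bigr => k _; rewrite permKV.
Qed.

Lemma crossing_balance (p q : 'S_n) :
  (forall k, b ((p^-1)%g k) = b ((q^-1)%g k)) -> (forall k : 'I_n, low k = low (q k)) ->
  \sum_(k : 'I_n) (low k && ~~ low (p k) && (b k == c) : nat) =
  \sum_(k : 'I_n) (~~ low k && low (p k) && (b k == c) : nat).
Proof.
move=> hpq hq.
have same : \sum_(k : 'I_n) (low k && (b k == c) : nat) =
            \sum_(k : 'I_n) (low (p k) && (b k == c) : nat).
  rewrite count_low_perm; under [RHS]eq_bigr => k _ do rewrite hpq.
  by rewrite -count_low_perm; apply: eq_bigr => k _; rewrite hq.
have split_low : \sum_(k : 'I_n) (low k && (b k == c) : nat) =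
    \sum_(k : 'I_n) (low k && low (p k) && (b k == c) : nat) +
    \sum_(k : 'I_n) (low k && ~~ low (p k) && (b k == c) : nat).
  by rewrite -big_split; apply: eq_bigr => k _; case: (low k); case: (low (p k)); case: eqP.
have split_plow : \sum_(k : 'I_n) (low (p k) && (b k == c) : nat) =
    \sum_(k : 'I_n) (low k && low (p k) && (b k == c) : nat) +
    \sum_(k : 'I_n) (~~ low k && low (p k) && (b k == c) : nat).
  by rewrite -big_split; apply: eq_bigr => k _; case: (low k); case: (low (p k)); case: eqP.
lia.
Qed.
End Crossing.

Section ShortestPermutation.
Variables (s : filling) (r : nat).
Local Notation n := (size s).
Local Notation b := (@row_word s r (size s)).

Definition next_in_block (z : nat) : bool := agree_below s r z.+1 z.+2.

Lemma block_boundary_stable (q : 'S_n) z :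
  (forall k : 'I_n, same_block s r k.+1 (q k).+1) -> ~~ next_in_block z ->
  forall k : 'I_n, (k <= z) = (q k <= z).
Proof.
move=> hq hz k; apply/idP/idP => h; apply/negPn/negP; rewrite -ltnNge => h2;
  move/allP: (hq k) => ha; move/negP: hz; apply; rewrite /next_in_block.
all: have /eqP e1 := ha z.+1 ltac:(rewrite mem_iota; lia).
all: have /eqP e2 := ha z.+2 ltac:(rewrite mem_iota; lia).
all: by rewrite /agree_below -e1 -e2.
Qed.

(* A shortest permutation realising a word never inverts two equal letters:
   undoing such an inversion gives the same word with smaller length. *)
Lemma shortest_no_tied_inversion w (p : 'S_n) : shortest_for s r w p ->
  forall x y : 'I_n, x < y -> p y < p x -> b x <> b y.
Proof.
move=> [hwp hmin] x y xy pyx bxy.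
have hw : permw b (tperm x y * p) = w.
  rewrite -hwp /permw; apply: eq_map => k.
  by rewrite invMg permM tpermV; case: tpermP => // ->.
by have := leq_trans (plen_swap_inversion xy pyx) (hmin _ hw); rewrite ltnn.
Qed.

(* Hence the shortest permutation of a word in W_r has all its inversions
   inside blocks: this is what makes every letter of its PDS a legal T. *)
Lemma shortest_inversions_within w (p : 'S_n) :
  inW s r w -> shortest_for s r w p -> inversions_within next_in_block p.
Proof.
move=> [q [hq hwq]] hsh x y xy pyx z xz zy; apply/negPn/negP => hz.
have hpq : forall k, b ((p^-1)%g k) = b ((q^-1)%g k).
  move: hsh => [+ _]; rewrite hwq /permw => /eq_in_map e k.
  by apply: e; rewrite mem_enum.
have bal c := crossing_balance c hpq (block_boundary_stable hq hz).
have tied := shortest_no_tied_inversion hsh.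
have [hpx|hpx] := leqP (p x) z.
- have : 0 < \sum_(k : 'I_n) (~~ (k <= z) && (p k <= z) && (b k == b y) : nat).
    by rewrite (bigD1 y) //= eqxx; have -> : ~~ (y <= z) && (p y <= z) by lia.
  rewrite -bal => /sum_bool_gt0 [x' /andP[/andP[h1 h2] /eqP h3]].
  by apply: (tied x' y) => //; lia.
- have : 0 < \sum_(k : 'I_n) ((k <= z) && ~~ (p k <= z) && (b k == b x) : nat).
    by rewrite (bigD1 x) //= eqxx; have -> : (x <= z) && ~~ (p x <= z) by lia.
  rewrite bal => /sum_bool_gt0 [y' /andP[/andP[h1 h2] /eqP h3]].
  by apply: (tied x y') => //; lia.
Qed.
End ShortestPermutation.

Section RectangleFamily.
Variables (s : filling) (m : nat).
Hypothesis rect_s : is_rect m s.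

(* T_v^(r), for v whose inversions stay inside the blocks of row r, is a
   composite of legal operators and so only reshuffles above row r-1. *)
Lemma T_perm_reshuffle r (p : 'S_(size s)) t : 0 < r <= m ->
  inversions_within (next_in_block s r) p ->
  maj_reshuffle m r.-1 s t -> maj_reshuffle m r.-1 s (T_perm p r t).
Proof.
move=> hr hinv; have := pds_letters (js := w0_js (size s)) hinv.
rewrite /T_perm -/(pds p); elim: (pds p) t => [//|j l IH] t hl ht /=.
have [hj hadj] := hl j (mem_head _ _).
apply: IH => [j' hj'|]; first by apply: hl; rewrite in_cons hj' orbT.
have [_ st rect_t take_t] := ht.
apply: (maj_reshuffle_trans ht); apply: T_op_reshuffle => //; first by rewrite st.
rewrite !(take_col _ take_t); move: hadj; rewrite /next_in_block prednK; last lia.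
by move/eqP.
Qed.

Lemma famR_reshuffle k t : m = height s 1 -> k <= m ->
  famR s k t -> maj_reshuffle m (m - k) s t.
Proof.
move=> hm; elim: k t => [|k IH] t hk /=; first by move=> ->; exact: maj_reshuffle_refl.
move=> [t0 [w [p [h0 [hw [hsh ->]]]]]].
rewrite -hm in hw hsh *; have -> : m - k.+1 = (m - k).-1 by lia.
apply: T_perm_reshuffle; first lia.
- exact: shortest_inversions_within hw hsh.
- by apply: (maj_reshuffle_le _ (IH t0 _ h0)); lia.
Qed.
End RectangleFamily.

Lemma fam_rect_maj s t : is_rect (height s 1) s -> fam_rect s t -> maj t = maj s.
Proof. by move=> hs /(famR_reshuffle hs erefl (leqnn _)) []. Qed.

Definition rects_step (c : seq nat) (acc : seq filling) : seq filling :=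
  match acc with
  | (d :: g) :: gs => if size d == size c then (c :: d :: g) :: gs else [:: c] :: acc
  | _ => [:: c] :: acc
  end.

Lemma rects_cons c s : rects (c :: s) = rects_step c (rects s).
Proof. by []. Qed.

Lemma rects_flatten s : flatten (rects s) = s.
Proof.
elim: s => // c s IH; rewrite rects_cons -[in RHS]IH /rects_step.
by case: (rects s) => [|[|d g] gs] //=; case: ifP.
Qed.

Lemma rects_rect s : all (fun R => is_rect (height R 1) R) (rects s).
Proof.
elim: s => // c s; rewrite rects_cons /rects_step /is_rect /height /col.
case: (rects s) => [|[|d g] gs] /=; rewrite ?eqxx //.
by case: ifP => [/eqP e|_] /= /andP[h ->]; rewrite ?andbT -?e eqxx //= eqxx h.
Qed.

Theorem mainTheorem7 (sigma : filling) :
  sorted_tableau sigma ->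
  forall tau, tab_family sigma tau -> maj tau = maj sigma.
Proof.
move=> _ tau [ts [hsz [hfam ->]]].
rewrite -[in RHS](rects_flatten sigma) !maj_flatten (big_nth [::]) [RHS](big_nth [::]) hsz.
rewrite !big_mkord; apply: eq_bigr => j _.
apply: fam_rect_maj; last by apply: hfam; rewrite hsz.
by apply: (allP (rects_rect sigma)); apply: mem_nth.
Qed.
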